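(* In the setting below, assume that $g(x)$ and $l(x)$ are both self-reciprocal. If $\gcd(t_{22}(x),g_{12}(x))\neq 1$, then $C$ is not Euclidean LCD.
   Context: Let $q$ be a prime power, $F=\mathbb{F}_q$, $m\ge1$ with $\gcd(q,m)=1$, and $R=F[x]/\langle x^m-1\rangle$; elements of $R$ are represented by polynomials of degree $<m$ and identified with their coefficient vectors in $F^m$. A quasi-cyclic code of length $2m$ and index $2$ is an $R$-submodule $C\subseteq R^2$. The Euclidean inner product of $(a_1,a_2),(b_1,b_2)\in R^2$ is the sum of the standard dot products of the coefficient vectors of $a_1,b_1$ and of $a_2,b_2$; $C$ is Euclidean LCD if $C\cap C^{\perp_e}=\{0\}$. For a nonzero polynomial $f$ of degree $k$, $f^*(x)=x^kf(x^{-1})$; $f$ is self-reciprocal if $f^*=\alpha f$ for some $\alpha\in F$. Suppose $C$ is generated as an $R$-module by $(g_{11}(x),g_{12}(x))$ and $(0,g_{22}(x))$, where $g_{11},g_{12},g_{22}\in F[x]$ satisfy: $g_{11}\mid x^m-1$, $g_{22}\mid x^m-1$, $\deg g_{12}<\deg g_{22}$, and $g_{11}g_{22}\mid (x^m-1)g_{12}$. Define $g=\gcd(g_{11},g_{22})$, $l=(x^m-1)/\mathrm{lcm}(g_{11},g_{22})$, $g_{22}=g\,g_{22}'$, $r_{22}=\gcd(g_{22}',g_{22}'^* )$, $t_{22}=g_{22}'/r_{22}$. *)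

From HB Require Import structures.
From mathcomp Require Import all_boot all_order all_algebra all_field.
Set Implicit Arguments. Unset Strict Implicit. Unset Printing Implicit Defensive.
Import GRing.Theory.
Local Open Scope ring_scope.

Definition xm1 (F : fieldType) (m : nat) : {poly F} := 'X^m - 1.

(* Reduction into R = F[x]/<x^m-1>, elements represented by polys of degree < m *)
Definition redm (F : fieldType) (m : nat) (p : {poly F}) : {poly F} := p %% xm1 F m.

(* reciprocal polynomial f^*(x) = x^deg f f(1/x) *)
Definition recip (F : fieldType) (f : {poly F}) : {poly F} :=
  \poly_(i < size f) f`_((size f).-1 - i).

Definition self_reciprocal (F : fieldType) (f : {poly F}) : Prop :=
  f != 0 /\ exists alpha : F, recip f = alpha *: f.

Definition lcmpoly (F : fieldType) (a b : {poly F}) : {poly F} :=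
  (a * b) %/ gcdp a b.

(* The quasi-cyclic code of index 2 generated as R-module by
   (g11, g12) and (0, g22): all r1*(g11,g12) + r2*(0,g22), r1 r2 in R. *)
Definition qc_code (F : fieldType) (m : nat) (g11 g12 g22 : {poly F})
  (u : {poly F} * {poly F}) : Prop :=
  exists r1 r2 : {poly F},
    u = (redm m (r1 * g11), redm m (r1 * g12 + r2 * g22)).

(* Euclidean inner product on R^2 (via coefficient vectors in F^m) *)
Definition eip (F : fieldType) (m : nat) (u v : {poly F} * {poly F}) : F :=
  \sum_(i < m) (u.1`_i * v.1`_i + u.2`_i * v.2`_i).

(* C is Euclidean LCD : C /\ C^{perp_e} = {0} *)
Definition euclidean_LCD (F : fieldType) (m : nat)
  (C : {poly F} * {poly F} -> Prop) : Prop :=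
  forall u, C u -> (forall v, C v -> eip m u v = 0) -> u = (0, 0).

From HB Require Import structures.
From mathcomp Require Import all_boot all_order all_algebra all_field.
From mathcomp Require Import fingroup cyclic zify.
From Stdlib Require Import Classical.
Import GRing.Theory FinRing.Theory.
Local Open Scope ring_scope.

(* Let p be an irreducible common factor of t22 and g12.  As x^m - 1 is
   separable, p^2 does not divide g22 = t22 r22 g; since p | t22 and g is
   self-reciprocal, this forces g22 to be coprime to the reciprocal p^*.
   Put e = (x^m - 1)/p and let c be the word whose coefficient vector is that of
   e reversed.  Then c p^* is x^k (x^m - 1) up to sign, so g22 | c and (0, c) is
   a nonzero codeword.  Its inner product with a codeword (a, b) is the
   coefficient of x^(m-1) in e b mod x^m - 1, which vanishes because p | b makes
   e b a multiple of x^m - 1.  Hence (0, c) lies in C and in its dual. *)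

Section Reversal.
Context {R : comNzRingType}.
Implicit Types f g : {poly R}.

Definition revp (n : nat) f : {poly R} := \poly_(i < n) f`_(n.-1 - i).

Lemma coef_revp n f i : (revp n f)`_i = if (i < n)%N then f`_(n.-1 - i) else 0.
Proof. exact: coef_poly. Qed.

Lemma revpD n f g : revp n (f + g) = revp n f + revp n g.
Proof. by apply/polyP=> i; rewrite !(coefD, coef_revp); case: ifP; rewrite ?addr0. Qed.

Lemma revpZ n c f : revp n (c *: f) = c *: revp n f.
Proof. by apply/polyP=> i; rewrite !(coefZ, coef_revp); case: ifP; rewrite ?mulr0. Qed.

HB.instance Definition _ n := GRing.isSemilinear.Build R {poly R} {poly R} _
  (revp n) (revpZ n, revpD n).

Lemma size_revp n f : (size (revp n f) <= n)%N.
Proof. exact: size_poly. Qed.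

Lemma revpK n f : (size f <= n)%N -> revp n (revp n f) = f.
Proof.
move=> sf; apply/polyP=> i; rewrite !coef_revp; case: (ltnP i n) => iN.
  by rewrite ifT; [congr (_`_ _) | ]; lia.
by rewrite nth_default // (leq_trans sf).
Qed.

Lemma revpXn n k : (k < n)%N -> revp n 'X^k = 'X^(n.-1 - k) :> {poly R}.
Proof.
move=> kn; apply/polyP=> i; rewrite coef_revp !coefXn; case: ifP => iN.
  by congr (_%:R); apply/eqP/eqP; lia.
by case: eqP => //; lia.
Qed.

Lemma revpM n k f g : (size f <= n)%N -> (size g <= k)%N ->
  revp (n + k).-1 (f * g) = revp n f * revp k g.
Proof.
move=> sf sg; rewrite -[f](take_poly_id sf) -[g](take_poly_id sg) /take_poly !poly_def.
rewrite big_distrl !linear_sum big_distrl /=; apply: eq_bigr => a _.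
rewrite big_distrr !linear_sum big_distrr /=; apply: eq_bigr => b _.
have [an bk] := (ltn_ord a, ltn_ord b).
rewrite -scalerAl -scalerAr -exprD !linearZ /= !revpXn //; last by lia.
rewrite -scalerAl -scalerAr -exprD !scalerA.
by have -> : ((n + k).-2 - (a + b) = n.-1 - a + (k.-1 - b))%N by lia.
Qed.

End Reversal.

Lemma modp_sum (F : fieldType) (d : {poly F}) I (r : seq I) (P : pred I)
    (G : I -> {poly F}) :
  (\sum_(i <- r | P i) G i) %% d = \sum_(i <- r | P i) (G i %% d).
Proof. exact: (big_morph _ (fun p q => modpD d p q) (mod0p d)). Qed.

Section Reciprocal.
Context {F : fieldType}.
Implicit Types d f g p q P : {poly F}.

Lemma recipE f : recip f = revp (size f) f.
Proof. by []. Qed.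

Lemma recip0 : recip 0 = 0 :> {poly F}.
Proof. by rewrite recipE size_poly0 /revp poly_def big_ord0. Qed.

Lemma recipM f g : recip (f * g) = recip f * recip g.
Proof.
have [->|f0] := eqVneq f 0; first by rewrite mul0r recip0 mul0r.
have [->|g0] := eqVneq g 0; first by rewrite mulr0 recip0 mulr0.
by rewrite !recipE size_mul // revpM.
Qed.

Lemma dvdp_recip f g : f %| g -> recip f %| recip g.
Proof. by case/dvdpP=> k ->; rewrite recipM dvdp_mull. Qed.

Lemma size_recip f : f`_0 != 0 -> size (recip f) = size f.
Proof. by move=> f0; apply: size_poly_eq; rewrite subnn. Qed.

Lemma recipK f : f`_0 != 0 -> recip (recip f) = f.
Proof. by move=> f0; rewrite {1}recipE size_recip // revpK. Qed.

Lemma revp_recip n f : (size f <= n)%N -> revp n f = 'X^(n - size f) * recip f.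
Proof.
move=> sf; apply/polyP=> i; rewrite coefXnM coef_revp recipE coef_revp.
set s := size f in sf *.
case: (ltnP i (n - s)) => [i_lt|i_ge].
  by case: ifP => // _; rewrite nth_default // -/s; lia.
have -> : (i - (n - s) < s)%N = (i < n)%N by apply/idP/idP; lia.
by case: ifP => // _; congr (_`_ _); lia.
Qed.

Lemma dvdp_coef0_neq0 [d f] : d %| f -> f`_0 != 0 -> d`_0 != 0.
Proof. by case/dvdpP=> k ->; rewrite coef0M mulf_eq0 negb_or => /andP[]. Qed.

Lemma irreducible_dvdp_recip p f : irreducible_poly p -> p`_0 != 0 -> f`_0 != 0 ->
  ~~ coprimep f (recip p) -> p %| recip f.
Proof.
move=> p_irr p0 f0 f_recip_p.
set h := gcdp f (recip p).
have h0 : h`_0 != 0 := dvdp_coef0_neq0 (dvdp_gcdl _ _) f0.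
have h_p : recip h %| p by rewrite -[p in _ %| p]recipK // dvdp_recip ?dvdp_gcdr.
have h_f : recip h %| recip f by rewrite dvdp_recip ?dvdp_gcdl.
have /eqp_dvdl <- // : recip h %= p.
by apply: p_irr h_p; rewrite size_recip // -coprimep_def.
Qed.

Lemma exists_irreducible_factor [d] : size d != 1 ->
  exists2 p, irreducible_poly p & p %| d.
Proof.
have [->|] := eqVneq d 0.
  by exists 'X; rewrite ?dvdp0 // -['X]subr0 -polyC0; apply: irredp_XsubC.
move: {2}(size d) (leqnn (size d)) => n; elim: n d => [|n IH] d sdn d0 sd1.
  by move: d0; rewrite -size_poly_eq0; lia.
have [d_irr|d_red] := classic (irreducible_poly d); first by exists d.
have [q [sq1 q_d q_ne]] : exists q, [/\ size q != 1, q %| d & ~~ (q %= d)].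
  apply: NNPP => no_q; apply: d_red; split.
    by rewrite ltn_neqAle eq_sym sd1 size_poly_gt0.
  by move=> q sq1 q_d; apply/negPn/negP => q_ne; apply: no_q; exists q.
have q0 : q != 0 by apply: contraNneq d0 => q0; move: q_d; rewrite q0 dvd0p.
have sq : (size q < size d)%N by rewrite ltn_neqAle dvdp_size_eqp // q_ne dvdp_leq.
have [p p_irr p_q] := IH q (leq_trans sq sdn) q0 sq1.
by exists p => //; apply: dvdp_trans q_d.
Qed.

Definition nonrecip_part f : {poly F} :=
  f %/ gcdp f (recip f).

Lemma coprimep_recip_of_dvdp_nonrecip_part P f g p :
  separable_poly P -> P`_0 != 0 -> f * g %| P -> self_reciprocal g ->
  irreducible_poly p -> p %| nonrecip_part f -> coprimep (f * g) (recip p).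
Proof.
move=> P_sep P0 fg_P [g_neq0 [a g_recip]] p_irr p_t.
have no_sq : ~~ (p ^+ 2 %| f * g).
  have sp : size p != 1 by case: p_irr => sp _; rewrite gtn_eqF.
  by apply/negP => /dvdp_trans/(_ fg_P); rewrite separable_nosquare.
have f_P : f %| P := dvdp_trans (dvdp_mulr g (dvdpp f)) fg_P.
have g_P : g %| P := dvdp_trans (dvdp_mull f (dvdpp g)) fg_P.
have p_f : p %| f := dvdp_trans p_t (divp_dvd (dvdp_gcdl _ _)).
have p0 : p`_0 != 0 := dvdp_coef0_neq0 (dvdp_trans p_f f_P) P0.
rewrite coprimepMl; apply/andP; split.
all: apply: contraTT no_sq => not_coprime; rewrite negbK.
  have p_r : p %| gcdp f (recip f).
    by rewrite dvdp_gcd p_f irreducible_dvdp_recip // (dvdp_coef0_neq0 f_P).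
  by rewrite expr2 dvdp_mulr // -(divpK (dvdp_gcdl f (recip f))) dvdp_mul.
have a0 : a != 0.
  apply: contraNneq g_neq0 => a0.
  rewrite -size_poly_eq0 -size_recip ?(dvdp_coef0_neq0 g_P) //.
  by rewrite g_recip a0 scale0r size_poly0.
have p_g : p %| g.
  by rewrite -(dvdpZr _ _ a0) -g_recip irreducible_dvdp_recip // (dvdp_coef0_neq0 g_P).
by rewrite expr2 dvdp_mul.
Qed.

End Reciprocal.

Section CyclicModulus.
Context {F : fieldType} {m : nat}.
Hypothesis m_gt0 : (0 < m)%N.
Implicit Types c e h p : {poly F}.
Local Notation xm1 := (xm1 F m).

Lemma size_xm1 : size xm1 = m.+1.
Proof. exact: size_Xn_sub_1. Qed.

Lemma xm1_neq0 : xm1 != 0.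
Proof. by rewrite -size_poly_gt0 size_xm1. Qed.

Lemma dvdp_xm1_coef0 [f] : f %| xm1 -> f`_0 != 0.
Proof.
move/dvdp_coef0_neq0; apply.
by rewrite coefB coefXn coef1 eqxx [(0 == m)%N]eq_sym gtn_eqF //= sub0r oppr_eq0 oner_eq0.
Qed.

Lemma recip_xm1 : recip xm1 = - xm1.
Proof.
apply/polyP=> i; rewrite recipE coef_revp size_xm1 /= coefN !coefB !coefXn !coef1.
case: (ltnP i m.+1) => im; last by rewrite !gtn_eqF ?subrr ?oppr0 //; lia.
have -> : (m - i == m)%N = (i == 0)%N by apply/eqP/eqP; lia.
have -> : (m - i == 0)%N = (i == m)%N by apply/eqP/eqP; lia.
by rewrite opprB.
Qed.

Lemma coef_modp_xm1_Xn i k : (i < m)%N -> (k < m)%N ->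
  (('X^(m.-1 - i + k) %% xm1)`_m.-1 : F) = (i == k)%:R.
Proof.
move=> im km; case: (leqP k i) => ki.
  rewrite modp_small; last by rewrite size_polyXn size_xm1; lia.
  by rewrite coefXn; congr (_%:R); apply/eqP/eqP; lia.
have -> : 'X^(m.-1 - i + k) = 'X^(k - i - 1) * xm1 + 'X^(k - i - 1) :> {poly F}.
  by rewrite mulrBr mulr1 subrK -exprD; congr ('X^_); lia.
rewrite modp_addl_mul_small; last by rewrite size_polyXn size_xm1; lia.
by rewrite coefXn; congr (_%:R); apply/eqP/eqP; lia.
Qed.

Lemma sum_coef_mul_modp_xm1 c h : (size c <= m)%N ->
  \sum_(i < m) c`_i * (h %% xm1)`_i = ((revp m c * h) %% xm1)`_m.-1.
Proof.
move=> sc; rewrite -modp_mul; set w := h %% xm1.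
have sw : (size w <= m)%N by have := ltn_modpN0 h xm1_neq0; rewrite size_xm1.
rewrite -[w in revp m c * w](take_poly_id sw) -[c in revp m c](take_poly_id sc).
rewrite /take_poly !poly_def linear_sum big_distrl /= modp_sum coef_sum.
apply: eq_bigr => i _; rewrite big_distrr modp_sum coef_sum /=.
rewrite (bigD1 i) //= big1 ?addr0 => [|k ki]; rewrite linearZ /= revpXn //.
all: rewrite -scalerAl -scalerAr -exprD scalerA modpZl coefZ coef_modp_xm1_Xn //.
  by rewrite eqxx mulr1.
by rewrite (inj_eq val_inj) eq_sym (negbTE ki) mulr0.
Qed.

Lemma xm1_dvdp_revp_mul_recip e p : e * p = xm1 -> (size e <= m)%N ->
  xm1 %| revp m e * recip p.
Proof.
move=> ep se; rewrite revp_recip // -mulrA -recipM ep recip_xm1.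
by rewrite mulrN dvdpNr dvdp_mull.
Qed.

Lemma sum_coef_revp_cofactor e p h : e * p = xm1 -> (size e <= m)%N -> p %| h ->
  \sum_(i < m) (revp m e)`_i * (h %% xm1)`_i = 0.
Proof.
move=> ep se /dvdpP[k ->]; rewrite sum_coef_mul_modp_xm1 ?size_revp // revpK //.
by rewrite mulrCA ep modp_mull coef0.
Qed.

Lemma qc_code_not_LCD_of_common_factor g11 g12 g22 p :
  (1 < size p)%N -> p %| xm1 -> p %| g12 -> p %| g22 -> g22 %| xm1 ->
  coprimep g22 (recip p) -> ~ euclidean_LCD m (qc_code m g11 g12 g22).
Proof.
move=> sp p_xm1 p_g12 p_g22 g22_xm1 g22_recip_p LCD.
set e := xm1 %/ p; set c := revp m e.
have ep : e * p = xm1 by rewrite divpK.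
have se : (size e <= m)%N.
  have p0 : p != 0 by rewrite -size_poly_gt0; lia.
  rewrite size_divp // size_xm1.
  by case: (size p) sp => [|[|k]] // _; rewrite subSS leq_subr.
have c0 : c != 0.
  by apply: contra_neq xm1_neq0 => c0; rewrite -ep -(revpK m e se) -/c c0 linear0 mul0r.
have g22_c : g22 %| c.
  by rewrite -(Gauss_dvdpl _ g22_recip_p) (dvdp_trans g22_xm1) ?xm1_dvdp_revp_mul_recip.
have c_in_C : qc_code m g11 g12 g22 (0, c).
  have [a ca] := dvdpP _ _ g22_c; exists 0, a.
  by rewrite /redm !mul0r mod0p add0r -ca modp_small // size_xm1 ltnS size_revp.
have c_orth_C v : qc_code m g11 g12 g22 v -> eip m (0, c) v = 0.
  move=> [r1 [r2 ->]]; rewrite /eip /redm /=.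
  under eq_bigr do rewrite coef0 mul0r add0r.
  by apply: sum_coef_revp_cofactor ep se _; rewrite dvdp_add ?dvdp_mull.
by case: (LCD _ c_in_C c_orth_C) => /eqP; apply/negP.
Qed.

End CyclicModulus.

Lemma natr_neq0_coprime_card {F : finFieldType} [m] : coprime #|F| m -> m%:R != 0 :> F.
Proof.
move=> co; apply/negP => /eqP m_0; have [p p_pr p_char] := finPcharP F.
have p_card : (p %| #|F|)%N.
  by rewrite (dvdn_pcharf p_char) -cardsT -zmodXgE expg_cardG // inE.
have p_m : (p %| m)%N by rewrite (dvdn_pcharf p_char) m_0.
have : (p %| gcdn #|F| m)%N by rewrite dvdn_gcd p_card p_m.
by rewrite (eqP co) dvdn1 => /eqP p1; rewrite p1 in p_pr.
Qed.

Theorem lemma3p4 (F : finFieldType) (m : nat) (g11 g12 g22 : {poly F}) :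
  (0 < m)%N ->
  coprime #|F| m ->
  g11 %| xm1 F m ->
  g22 %| xm1 F m ->
  (size g12 < size g22)%N ->
  (g11 * g22) %| (xm1 F m * g12) ->
  let g := gcdp g11 g22 in
  let l := xm1 F m %/ lcmpoly g11 g22 in
  let g22' := g22 %/ g in
  let r22 := gcdp g22' (recip g22') in
  let t22 := g22' %/ r22 in
  self_reciprocal g ->
  self_reciprocal l ->
  ~~ coprimep t22 g12 ->
  ~ euclidean_LCD m (qc_code m g11 g12 g22).
Proof.
move=> m_gt0 co _ g22_xm1 _ _ g l g22' r22 t22 g_srecip _.
rewrite coprimep_def => t22_g12.
have [p p_irr p_gcd] := exists_irreducible_factor t22_g12.
have p_t22 : p %| t22 := dvdp_trans p_gcd (dvdp_gcdl _ _).
have p_g12 : p %| g12 := dvdp_trans p_gcd (dvdp_gcdr _ _).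
have g22E : g22' * g = g22 := divpK (dvdp_gcdr _ _).
have p_g22 : p %| g22.
  by rewrite -g22E dvdp_mulr // (dvdp_trans p_t22) // divp_dvd // dvdp_gcdl.
have xm1_sep : separable_poly (xm1 F m).
  exact: separable_Xn_sub_1 (natr_neq0_coprime_card co).
have p_xm1 : p %| xm1 F m := dvdp_trans p_g22 g22_xm1.
have p_size : (1 < size p)%N by case: p_irr.
have g22_recip_p : coprimep g22 (recip p).
  rewrite -g22E; apply: (coprimep_recip_of_dvdp_nonrecip_part _ _ _ _ xm1_sep) => //.
    exact: (dvdp_xm1_coef0 m_gt0 (dvdpp _)).
  by rewrite g22E.
exact: (qc_code_not_LCD_of_common_factor m_gt0 _ _ _ p).
Qed.
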